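(* Let $\mathcal{X}=\mathcal{X}^{(1)}\times\cdots\times\mathcal{X}^{(d)}$ with each $\mathcal{X}^{(i)}$ finite, let $\pi\in\mathcal{P}(\mathcal{X})$ be positive, $P\in\mathcal{L}(\mathcal{X})$, fix $i\in\{1,\dots,d\}$ and $L_j\in\mathcal{L}(\mathcal{X}^{(j)})$ for $j\neq i$. Consider minimizers $L_*^{(i)}\in\arg\min_{L\in\mathcal{L}(\mathcal{X}^{(i)})}D_f^\pi\big(P\,\|\,(\otimes_{j<i}L_j)\otimes L\otimes(\otimes_{j>i}L_j)\big)$. Writing $x=(x^1,\dots,x^d)$, $x^{(-i)}=(x^j)_{j\ne i}$, $\mathbf{Z}(x^{(-i)},y^{(-i)}):=\prod_{j\neq i}L_j(x^j,y^j)$ and $Z(x^i,y^i):=\sum_{x^{(-i)},y^{(-i)}}\pi(x)\mathbf{Z}(x^{(-i)},y^{(-i)})$: 1. If $f(t)=-\ln t$ (reverse KL), the unique $L^{(i)}_*$ is given by $L_*^{(i)}(x^i,y^i)\propto\prod_{x^{(-i)},y^{(-i)}}P(x,y)^{\pi(x)\mathbf{Z}(x^{(-i)},y^{(-i)})/Z(x^i,y^i)}$ (normalized over $y^i$). 2. If $f(t)=\frac{1}{\alpha-1}(t^\alpha-1)$ with $\alpha\in(0,1)\cup(1,\infty)$, the unique $L^{(i)}_*$ is given by $L_*^{(i)}(x^i,y^i)\propto\Big(\sum_{x^{(-i)},y^{(-i)}}\pi(x)\big(\prod_{j\ne i}L_j(x^j,y^j)\big)^{1-\alpha}P(x,y)^\alpha\Big)^{1/\alpha}$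 (normalized over $y^i$). 3. If $f(t)=t\ln t$ (KL), the unique $L^{(i)}_*$ is $L_*^{(i)}=P^{(i)}_\pi$, which does not depend on $L_j$, $j\ne i$.
   Context: $\mathcal{P}(\Omega),\mathcal{L}(\Omega)$: probability masses and transition matrices on finite $\Omega$. $D_f^{\pi}(M\|L):=\sum_{x}\pi(x)\sum_y L(x,y)f\big(M(x,y)/L(x,y)\big)$ with standard conventions $0f(0/0)=0$, $0f(a/0)=a\lim_{t\to0^+}tf(1/t)$. $(\otimes_jL_j)(x,y)=\prod_jL_j(x^j,y^j)$. $P^{(i)}_\pi(x^i,y^i):=\frac{\sum_{x^{(-i)},y^{(-i)}}\pi(x)P(x,y)}{\pi^{(i)}(x^i)}$, with $\pi^{(i)}$ the $i$th marginal of $\pi$. *)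

From HB Require Import structures.
From mathcomp Require Import all_boot all_order all_algebra.
From mathcomp Require Import all_classical all_reals all_analysis.
Set Implicit Arguments. Unset Printing Implicit Defensive.
Import Order.TTheory GRing.Theory Num.Theory.
Import numFieldNormedType.Exports.
Local Open Scope classical_set_scope.
Local Open Scope ring_scope.

Section Defs.
Context {R : realType}.

Definition is_pmf {S : finType} (pi : S -> R) : Prop :=
  (forall x, 0 <= pi x) /\ \sum_x pi x = 1.

Definition is_trans {S : finType} (L : S -> S -> R) : Prop :=
  (forall x y, 0 <= L x y) /\ (forall x, \sum_y L x y = 1).

Definition f_at0 (f : R -> R) : \bar R := lim ((fun t => (f t)%:E) @ 0^'+).
Definition f_inf (f : R -> R) : \bar R := lim ((fun t => (t * f t^-1)%:E) @ 0^'+).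

(* the summand  L f(M/L)  with conventions 0 f(0/0) = 0,
   0 f(a/0) = a lim_{t->0+} t f(1/t), and f(0) := f(0+) *)
Definition fterm (f : R -> R) (m l : R) : \bar R :=
  if l == 0 then (if m == 0 then 0%E else (m%:E * f_inf f)%E)
  else if m == 0 then (l%:E * f_at0 f)%E
  else (l * f (m / l))%:E.

Definition fdiv {S : finType} (f : R -> R) (pi : S -> R) (M L : S -> S -> R)
  : \bar R := (\sum_x (pi x)%:E * \sum_y fterm f (M x y) (L x y))%E.

Definition f_revKL (t : R) : R := - ln t.
Definition f_alpha (alpha : R) (t : R) : R := (t `^ alpha - 1) / (alpha - 1).
Definition f_KL (t : R) : R := t * ln t.

Context {d : nat} {T : 'I_d -> finType}.
Definition prodX := {dffun forall j : 'I_d, T j}.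

Variable (i : 'I_d) (Ls : forall j : 'I_d, T j -> T j -> R).

Definition Zbold (x y : prodX) : R := \prod_(j : 'I_d | j != i) Ls j (x j) (y j).

Definition tensor_at (L : T i -> T i -> R) (x y : prodX) : R :=
  Zbold x y * L (x i) (y i).

Variable (pi : prodX -> R) (P : prodX -> prodX -> R).

Definition Zsmall (a b : T i) : R :=
  \sum_(x : prodX | x i == a) \sum_(y : prodX | y i == b) pi x * Zbold x y.

Definition objective (f : R -> R) (L : T i -> T i -> R) : \bar R :=
  fdiv f pi P (tensor_at L).

Definition is_minimizer (f : R -> R) (L : T i -> T i -> R) : Prop :=
  is_trans L /\
  forall L' : T i -> T i -> R, is_trans L' -> (objective f L <= objective f L')%E.

Definition unique_minimizer (f : R -> R) (Lstar : T i -> T i -> R) : Prop :=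
  is_minimizer f Lstar /\
  forall L, is_minimizer f L -> forall a b, L a b = Lstar a b.

(* finiteness of the minimal value (well-posedness of the argmin) *)
Definition finite_min (f : R -> R) : Prop :=
  exists L, is_trans L /\ (objective f L < +oo)%E.

Definition normalize (w : T i -> T i -> R) (a b : T i) : R :=
  w a b / \sum_(b' : T i) w a b'.

Definition normalizable (w : T i -> T i -> R) : Prop :=
  forall a, 0 < \sum_(b : T i) w a b.

Definition w_revKL (a b : T i) : R :=
  \prod_(x : prodX | x i == a) \prod_(y : prodX | y i == b)
     P x y `^ (pi x * Zbold x y / Zsmall a b).

Definition w_alpha (alpha : R) (a b : T i) : R :=
  (\sum_(x : prodX | x i == a) \sum_(y : prodX | y i == b)
     pi x * (Zbold x y) `^ (1 - alpha) * P x y `^ alpha) `^ alpha^-1.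

Definition marg (a : T i) : R := \sum_(x : prodX | x i == a) pi x.
Definition P_marg (a b : T i) : R :=
  (\sum_(x : prodX | x i == a) \sum_(y : prodX | y i == b) pi x * P x y) / marg a.

End Defs.

From HB Require Import structures.
From mathcomp Require Import all_boot all_order all_algebra.
From mathcomp Require Import all_classical all_reals all_analysis.
From mathcomp Require Import ring lra.
Import Order.TTheory GRing.Theory Num.Theory.
Import numFieldNormedType.Exports.
Local Open Scope ring_scope.

(* Write the objective as [sum_x pi(x) sum_y Q f(M/Q)] with [M = P(x, y)] and
   [Q = Zbold(x, y) L(x^i, y^i)].  For each of the three generators the summand is
   [+oo] on an explicit set of pairs [(M, Q)] and a closed-form real expression
   elsewhere, so the objective is either [+oo] or a finite sum.  Group [x] and [y]
   by their [i]-th coordinates [(a, b)]: a sum [sum_y G(y) L(a, y^i)] does not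
   depend on the stochastic matrix [L] when [G] ignores [y^i], so the terms linear
   in [L] cancel, and the objective at an admissible [L] minus the objective at the
   claimed minimizer [L_*] becomes
     [sum_a c_a sum_b g(L(a, b), L_*(a, b))]   with   [c_a > 0],
   where [g >= 0] vanishes only on the diagonal: [g] is the Bregman divergence of
   [t ln t] for KL (with swapped arguments for reverse KL) and the gap in the
   weighted AM-GM inequality for the alpha-divergences. *)

Section GeneratorLimits.
Context {R : realType}.
Local Open Scope classical_set_scope.
Implicit Types (f : R -> R) (a l t : R).

Lemma lim_right0_EFin f l :
  f x @[x --> 0^'+] --> l -> lim ((fun t => (f t)%:E) @ 0^'+) = l%:E.
Proof.
by move=> fl; apply: cvg_lim => //; apply: cvg_EFin => //; near=> x.
Unshelve. all: by end_near. Qed.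

Lemma lim_right0_pinfty f :
  f x @[x --> 0^'+] --> +oo -> lim ((fun t => (f t)%:E) @ 0^'+) = +oo%E.
Proof. by move=> fl; apply: cvg_lim => //; apply/cvgeryP. Qed.

Lemma oppr_ln_cvgy : - ln (x : R) @[x --> 0^'+] --> +oo.
Proof. exact/cvgNry/lnNy. Qed.

(* squeeze: [-2 sqrt t <= t ln t <= 0] on [(0, 1)], from [ln s < s] at [s = t^(-1/2)] *)
Lemma xlnx_cvg0 : (x : R) * ln x @[x --> 0^'+] --> 0.
Proof.
have sqrt_cvg0 : - (2 * x `^ 2^-1) @[x --> 0^'+] --> (- (2 * 0) : R).
  by apply: cvgN; apply: cvgM; [exact: cvg_cst | exact: powR_cvg0].
rewrite mulr0 oppr0 in sqrt_cvg0.
apply: (squeeze_cvgr _ sqrt_cvg0 (cvg_cst 0)); near=> t.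
have t0 : 0 < t by near: t; exact: nbhs_right_gt.
have t1 : t < 1 by near: t; exact: nbhs_right_lt.
apply/andP; split; last by rewrite pmulr_rle0 ?ln_le0 ?ltW.
have := ln_sublinear (powR_gt0 (- 2^-1) t0); rewrite ln_powR => lt_ln.
have sqrtE : t * t `^ (- 2^-1) = t `^ 2^-1.
  rewrite -{1}(powRr1 (ltW t0)) -powRD; last by rewrite (gt_eqF t0) implybT.
  by congr (_ `^ _); field.
have : - 2^-1 * ln t * t < t `^ (- 2^-1) * t by rewrite ltr_pM2r.
rewrite [X in _ < X]mulrC sqrtE; lra.
Unshelve. all: by end_near. Qed.

Lemma f_at0_revKL : f_at0 (@f_revKL R) = +oo%E.
Proof. exact/lim_right0_pinfty/oppr_ln_cvgy. Qed.

Lemma f_inf_revKL : f_inf (@f_revKL R) = 0%E.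
Proof.
apply/lim_right0_EFin/(cvg_trans _ xlnx_cvg0)/near_eq_cvg; near=> t.
have t0 : 0 < t by near: t; exact: nbhs_right_gt.
by rewrite /f_revKL lnV ?posrE // opprK.
Unshelve. all: by end_near. Qed.

Lemma f_at0_KL : f_at0 (@f_KL R) = 0%E.
Proof. exact/lim_right0_EFin/xlnx_cvg0. Qed.

Lemma f_inf_KL : f_inf (@f_KL R) = +oo%E.
Proof.
apply/lim_right0_pinfty/(cvg_trans _ oppr_ln_cvgy)/near_eq_cvg; near=> t.
have t0 : 0 < t by near: t; exact: nbhs_right_gt.
by rewrite /f_KL mulrA mulfV ?gt_eqF // mul1r lnV ?posrE.
Unshelve. all: by end_near. Qed.

Lemma f_at0_alpha a : 0 < a -> f_at0 (f_alpha a) = (- (a - 1)^-1)%:E.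
Proof.
move=> a0; apply: lim_right0_EFin.
have -> : - (a - 1)^-1 = (0 - 1) / (a - 1) by rewrite sub0r mulN1r.
apply: cvgM; [apply: cvgB; [exact: powR_cvg0 | exact: cvg_cst] | exact: cvg_cst].
Qed.

Lemma mul_powR_inv t a : 0 < t -> t * t^-1 `^ a = t `^ (1 - a).
Proof.
move=> t0; rewrite -powR_inv1 ?(ltW t0) // -powRrM -{1}(powRr1 (ltW t0)).
rewrite -powRD; last by rewrite (gt_eqF t0) implybT.
by congr (_ `^ _); ring.
Qed.

Lemma f_inf_alpha_lt1 a : 0 < a -> a < 1 -> f_inf (f_alpha a) = 0%E.
Proof.
move=> a0 a1; apply: lim_right0_EFin.
have lim0 : (x `^ (1 - a) - x) / (a - 1) @[x --> 0^'+] --> ((0 - 0) / (a - 1) : R).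
  apply: cvgM; last exact: cvg_cst.
  by apply: cvgB; [apply: powR_cvg0; rewrite subr_gt0 | exact/cvg_at_right_filter/cvg_id].
rewrite subr0 mul0r in lim0; apply/(cvg_trans _ lim0)/near_eq_cvg; near=> t.
have t0 : 0 < t by near: t; exact: nbhs_right_gt.
by rewrite /f_alpha mulrA mulrBr mulr1 mul_powR_inv.
Unshelve. all: by end_near. Qed.

(* [t^(1-a) >= 1 + (1-a) ln t] reduces the claim to [- ln t --> +oo] *)
Lemma f_inf_alpha_gt1 a : 1 < a -> f_inf (f_alpha a) = +oo%E.
Proof.
move=> a1; apply/lim_right0_pinfty/(ger_cvgy _ oppr_ln_cvgy); near=> t.
have t0 : 0 < t by near: t; exact: nbhs_right_gt.
have t1 : t < 1 by near: t; exact: nbhs_right_lt.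
rewrite /f_alpha mulrA mulrBr mulr1 mul_powR_inv // ler_pdivlMr ?subr_gt0 //.
have : 1 + (1 - a) * ln t <= t `^ (1 - a) by rewrite /powR gt_eqF // expR_ge1Dx.
have : ln t < 0 by rewrite ln_lt0 ?t0.
nra.
Unshelve. all: by end_near. Qed.

End GeneratorLimits.

Section Summands.
Context {R : realType}.

Definition pinfty_or (b : bool) (r : R) : \bar R := if b then +oo%E else r%:E.

Lemma pinfty_orD b1 b2 r1 r2 :
  (pinfty_or b1 r1 + pinfty_or b2 r2)%E = pinfty_or (b1 || b2) (r1 + r2).
Proof. by case: b1; case: b2. Qed.

Lemma sum_pinfty_or (I : finType) (b : pred I) (r : I -> R) :
  (\sum_k pinfty_or (b k) (r k))%E = pinfty_or [exists k, b k] (\sum_k r k).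
Proof.
have -> : [exists k, b k] = \big[orb/false]_k b k by rewrite big_orE.
by elim/big_rec3: _ => // k y1 y2 y3 _ ->; rewrite pinfty_orD.
Qed.

Lemma pinfty_orZ p b r : 0 < p -> (p%:E * pinfty_or b r)%E = pinfty_or b (p * r).
Proof. by move=> p0; case: b => //=; rewrite gt0_muley ?lte_fin. Qed.

Implicit Types a m q : R.

Lemma fterm_revKL m q : 0 <= m -> 0 <= q ->
  fterm f_revKL m q = pinfty_or ((q != 0) && (m == 0)) (q * (ln q - ln m)).
Proof.
move=> m0 q0; rewrite /fterm.
have [->|qn0] := eqVneq q 0.
  by case: eqP => _ /=; rewrite ?f_inf_revKL ?mule0 ?mul0r.
have qp : 0 < q by rewrite lt_def qn0.
have [->|mn0] := eqVneq m 0; first by rewrite f_at0_revKL /= gt0_muley ?lte_fin.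
have mp : 0 < m by rewrite lt_def mn0.
by rewrite /= /f_revKL ln_div ?posrE //; congr (_%:E); ring.
Qed.

Lemma fterm_KL m q : 0 <= m -> 0 <= q ->
  fterm f_KL m q = pinfty_or ((q == 0) && (m != 0)) (m * (ln m - ln q)).
Proof.
move=> m0 q0; rewrite /fterm.
have [->|qn0] := eqVneq q 0.
  have [->|mn0] := eqVneq m 0; first by rewrite /= mul0r.
  by rewrite f_inf_KL /= gt0_muley ?lte_fin // lt_def mn0.
have qp : 0 < q by rewrite lt_def qn0.
have [->|mn0] := eqVneq m 0; first by rewrite f_at0_KL /= mule0 mul0r.
have mp : 0 < m by rewrite lt_def mn0.
by rewrite /= /f_KL ln_div ?posrE //; congr (_%:E); field; rewrite gt_eqF.
Qed.

Lemma fterm_alpha a : 0 < a -> a != 1 -> forall m q, 0 <= m -> 0 <= q ->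
  fterm (f_alpha a) m q =
  pinfty_or [&& 1 < a, q == 0 & m != 0] ((m `^ a * q `^ (1 - a) - q) / (a - 1)).
Proof.
move=> a0 a1 m q m0 q0; rewrite /fterm.
have [->|qn0] := eqVneq q 0.
  have a1' : 1 - a != 0 by rewrite subr_eq0 eq_sym.
  rewrite powR0 // mulr0 subr0 mul0r.
  have [_|mn0] := eqVneq m 0; first by rewrite andbF.
  have [alt1|age1] := ltrP a 1.
    by rewrite f_inf_alpha_lt1 // mule0 /= ltNge (ltW alt1).
  have agt1 : 1 < a by rewrite lt_def a1.
  by rewrite f_inf_alpha_gt1 //= agt1 gt0_muley ?lte_fin // lt_def mn0.
have qp : 0 < q by rewrite lt_def qn0.
rewrite /= andbF.
have [->|mn0] := eqVneq m 0.
  rewrite f_at0_alpha // powR0 ?gt_eqF // mul0r /=; congr (_%:E); field.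
  by rewrite subr_eq0.
have mp : 0 < m by rewrite lt_def mn0.
rewrite /f_alpha; congr (_%:E); rewrite mulrA mulrBr mulr1; congr ((_ - _) / _).
rewrite powRM ?invr_ge0 ?(ltW mp) ?(ltW qp) // -powR_inv1 ?(ltW qp) // -powRrM mulrCA.
by rewrite -{1}(powRr1 (ltW qp)) -powRD ?(gt_eqF qp) ?implybT //; congr (_ * _ `^ _); ring.
Qed.

End Summands.

Section Inequalities.
Context {R : realType}.
Implicit Types (a l p q u x y : R) (C : bool).

Lemma leif_ln x y C : 0 < x -> 0 < y -> (ln x <= ln y ?= iff C) = (x <= y ?= iff C).
Proof.
by move=> x0 y0; rewrite /Order.leif ler_ln ?posrE // (inj_in_eq (@ln_inj R)) ?posrE.
Qed.

Lemma ln_prod (I : finType) (Q : pred I) (F : I -> R) :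
  (forall k, Q k -> 0 < F k) -> ln (\prod_(k | Q k) F k) = \sum_(k | Q k) ln (F k).
Proof.
move=> F_gt0.
suff [] : 0 < \prod_(k | Q k) F k /\ ln (\prod_(k | Q k) F k) = \sum_(k | Q k) ln (F k).
  by [].
elim/big_rec2: _ => [|k p s Qk [p_gt0 <-]]; first by rewrite ln1.
by rewrite mulr_gt0 ?F_gt0 // lnM ?posrE ?F_gt0.
Qed.

Lemma ln_leif u : 0 < u -> ln u <= u - 1 ?= iff (u == 1).
Proof.
move=> u0; apply/leifP; have [->|u1] := eqVneq u 1; first by rewrite ln1 subrr.
have : 1 + ln u < expR (ln u) by apply: expR_gt1Dx; rewrite ln_eq0.
rewrite lnK ?posrE //; lra.
Qed.

Lemma divr_eq1 x y : y != 0 -> (x / y == 1) = (x == y).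
Proof.
by move=> y0; apply/eqP/eqP => [xy1|->]; [rewrite -(divfK y0 x) xy1 mul1r | exact: mulfV].
Qed.

Lemma mulr_powR1B x a : 0 <= x -> x `^ a * x `^ (1 - a) = x.
Proof.
by move=> x0; rewrite -powRD (addrC a) subrK ?powRr1 // oner_eq0.
Qed.

(* the Bregman divergence of [t ln t] *)
Definition kl_bregman p l := p * (ln p - ln l) + l - p.

Lemma sum_kl_bregman (I : finType) (p l : I -> R) : \sum_k p k = \sum_k l k ->
  \sum_k kl_bregman (p k) (l k) = \sum_k p k * (ln (p k) - ln (l k)).
Proof.
move=> pl; rewrite /kl_bregman; under eq_bigr => k _ do rewrite -addrA.
by rewrite big_split /= sumrB pl subrr addr0.
Qed.

Lemma kl_bregman_leif p l : 0 <= p -> 0 <= l -> (0 < p -> 0 < l) ->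
  0 <= kl_bregman p l ?= iff (p == l).
Proof.
move=> p0 l0 pl; have [->|pn0] := eqVneq p 0.
  by rewrite /kl_bregman mul0r add0r subr0; apply: leif_eq.
have pp : 0 < p by rewrite lt_def pn0.
have lp := pl pp.
have -> : kl_bregman p l = p * (l / p - 1 - ln (l / p)).
  by rewrite /kl_bregman ln_div ?posrE //; field; rewrite gt_eqF.
have -> : (p == l) = (l / p == 1) by rewrite divr_eq1 // eq_sym.
rewrite -(mulr0 p) (mono_leif (ler_pM2l pp)) leifBRL add0r.
by apply: ln_leif; rewrite divr_gt0.
Qed.

(* weighted AM-GM, from [ln u <= u - 1] at [u = q/A] and [u = l/A] with [A] the arithmetic mean *)
Lemma powR_wavg_leif a q l : 0 < a -> a < 1 -> 0 <= q -> 0 <= l ->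
  q `^ a * l `^ (1 - a) <= a * q + (1 - a) * l ?= iff (q == l).
Proof.
move=> a0 a1 q0 l0; have a1' : 0 < 1 - a by rewrite subr_gt0.
have [->|qn0] := eqVneq q 0.
  rewrite powR0 ?(lt0r_neq0 a0) // mul0r mulr0 add0r; apply/leifP.
  by case: eqVneq => [<-|l_neq0]; rewrite ?mulr0 // mulr_gt0 // lt_def eq_sym l_neq0.
have [->|ln0] := eqVneq l 0.
  rewrite powR0 ?(lt0r_neq0 a1') // !mulr0 addr0; apply/leifP; rewrite (negbTE qn0).
  by rewrite mulr_gt0 // lt_def qn0.
have qp : 0 < q by rewrite lt_def qn0.
have lp : 0 < l by rewrite lt_def ln0.
set A := a * q + (1 - a) * l.
have Ap : 0 < A by rewrite addr_gt0 // mulr_gt0.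
have Gp : 0 < q `^ a * l `^ (1 - a) by rewrite mulr_gt0 ?powR_gt0.
have scaled w u : 0 < w -> 0 < u -> w * ln u <= w * (u - 1) ?= iff (u == 1).
  by move=> w0 u0; rewrite (mono_leif (ler_pM2l w0)); exact: ln_leif.
have := leifD (scaled a (q / A) a0 (divr_gt0 qp Ap)) (scaled _ (l / A) a1' (divr_gt0 lp Ap)).
have -> : a * (q / A - 1) + (1 - a) * (l / A - 1) = 0.
  by rewrite /A; field; rewrite gt_eqF.
have -> : a * ln (q / A) + (1 - a) * ln (l / A) = ln (q `^ a * l `^ (1 - a)) - ln A.
  rewrite [ln (q `^ a * _)]lnM ?posrE ?powR_gt0 // !ln_powR !ln_div ?posrE //; ring.
rewrite leifBLR add0r leif_ln // !divr_eq1 ?lt0r_neq0 //.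
have -> : (q == A) = (q == l).
  rewrite -subr_eq0 (_ : q - A = (1 - a) * (q - l)); last by rewrite /A; ring.
  by rewrite mulf_eq0 (gt_eqF a1') subr_eq0.
have -> : (l == A) = (q == l).
  rewrite -subr_eq0 (_ : l - A = a * (l - q)); last by rewrite /A; ring.
  by rewrite mulf_eq0 (gt_eqF a0) subr_eq0 eq_sym.
by rewrite andbb.
Qed.

(* for [a > 1], AM-GM with weight [1/a] applied to [q^a l^(1-a)] and [l] *)
Lemma powR_wavg_ge_leif a q l : 1 < a -> 0 <= q -> 0 < l ->
  a * q + (1 - a) * l <= q `^ a * l `^ (1 - a) ?= iff (q == l).
Proof.
move=> a1 q0 l0; have a0 : 0 < a by lra.
set G := q `^ a * l `^ (1 - a).
have G0 : 0 <= G by rewrite mulr_ge0 ?powR_ge0.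
have qE : G `^ a^-1 * l `^ (1 - a^-1) = q.
  rewrite /G powRM ?powR_ge0 // -!powRrM mulfV ?gt_eqF // powRr1 // -mulrA.
  rewrite -powRD; last by rewrite (gt_eqF l0) implybT.
  by rewrite (_ : _ + _ = 0) ?powRr0 ?mulr1 //; field; rewrite gt_eqF.
have ia0 : 0 < a^-1 by rewrite invr_gt0.
have ia1 : a^-1 < 1 by rewrite invf_lt1.
have := @powR_wavg_leif _ _ _ ia0 ia1 G0 (ltW l0).
rewrite qE -(mono_leif (ler_pM2l a0)).
rewrite (_ : a * (a^-1 * G + _) = G + (a - 1) * l); last by field; rewrite gt_eqF.
rewrite (_ : a * q + _ = a * q - (a - 1) * l); last by ring.
rewrite leifBLR => le_aq.
suff <- : (G == l) = (q == l) by [].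
apply/eqP/eqP => [Gl|ql]; last by rewrite /G ql mulr_powR1B // ltW.
have := eq_leif le_aq; rewrite Gl eqxx => /eqP aqE.
by apply: (mulfI (lt0r_neq0 a0)); rewrite aqE; ring.
Qed.

Definition alpha_gap a q l := (q `^ a * l `^ (1 - a) - (a * q + (1 - a) * l)) / (a - 1).

Lemma alpha_gap_leif a q l : 0 < a -> a != 1 -> 0 <= q -> 0 <= l ->
  (1 < a -> l = 0 -> q = 0) -> 0 <= alpha_gap a q l ?= iff (q == l).
Proof.
move=> a0 a1 q0 l0 l0q0; rewrite /alpha_gap.
have [alt1|agt1] := ltrP a 1.
  have a1' : 0 < 1 - a by rewrite subr_gt0.
  rewrite (_ : _ / _ = (1 - a)^-1 * (a * q + (1 - a) * l - q `^ a * l `^ (1 - a))); last first.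
    by field; rewrite !subr_eq0 eq_sym andbb.
  rewrite -(mulr0 (1 - a)^-1) (mono_leif (ler_pM2l _)) ?invr_gt0 // leifBRL add0r.
  exact: powR_wavg_leif.
have {}agt1 : 1 < a by rewrite lt_def a1.
have a1' : 0 < a - 1 by rewrite subr_gt0.
have [l_eq0|l_neq0] := eqVneq l 0.
  rewrite l_eq0 (l0q0 agt1 l_eq0) powR0 ?(lt0r_neq0 a0) //.
  by rewrite !(mul0r, mulr0, addr0, subr0); apply/leif_refl.
rewrite mulrC -(mulr0 (a - 1)^-1) (mono_leif (ler_pM2l _)) ?invr_gt0 // leifBRL add0r.
by apply: powR_wavg_ge_leif; rewrite // lt_def l_neq0.
Qed.

Lemma leif0_sum_rows (I J : finType) (c : I -> R) (g : I -> J -> R) (C : I -> J -> bool) :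
  (forall i, 0 < c i) -> (forall i j, 0 <= g i j ?= iff C i j) ->
  0 <= \sum_i c i * \sum_j g i j ?= iff [forall i, forall j, C i j].
Proof.
move=> c_gt0 g_leif.
suff : 0 <= \sum_i c i * \sum_j g i j ?= iff [forall (i | true), [forall (j | true), C i j]].
  by [].
apply: leif_0_sum => i _.
have := @leif_0_sum _ J xpredT (C i) (g i) (fun j _ => g_leif i j).
by rewrite -(mono_leif (ler_pM2l (c_gt0 i))) mulr0.
Qed.

End Inequalities.

Lemma psumr_gt0 (R : numDomainType) (I : finType) (P : pred I) (F : I -> R) (i0 : I) :
  (forall i, P i -> 0 <= F i) -> P i0 -> 0 < F i0 -> 0 < \sum_(i | P i) F i.
Proof.
move=> F0 Pi0 Fi0; rewrite lt_def psumr_neq0 ?sumr_ge0 // andbT.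
by apply/hasP; exists i0; rewrite ?mem_index_enum ?Pi0.
Qed.

Section CoordinateBlocks.
Context {R : realType} {d : nat} {T : 'I_d -> finType}.
Variable i : 'I_d.
Local Notation X := (prodX (T:=T)).
Implicit Types (x y : X) (a b c : T i).

Definition set_coord b y : X := [ffun j => @dfwith _ T (fun k => y k) i b j].

Lemma set_coord_at b y : set_coord b y i = b.
Proof. by rewrite /set_coord ffunE; exact: dfwith_in. Qed.

Lemma set_coord_other b y j : j != i -> set_coord b y j = y j.
Proof. by move=> ji; rewrite /set_coord ffunE; apply: dfwith_out; rewrite eq_sym. Qed.

Lemma set_coordK y : set_coord (y i) y = y.
Proof.
apply/ffunP => j; have [->|ji] := eqVneq j i; first by rewrite set_coord_at.
by rewrite set_coord_other.
Qed.

Lemma set_coord2 b c y : set_coord b (set_coord c y) = set_coord b y.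
Proof.
apply/ffunP => j; have [->|ji] := eqVneq j i; first by rewrite !set_coord_at.
by rewrite !set_coord_other.
Qed.

Definition block_sum (F : X -> X -> R) a b : R :=
  \sum_(x : X | x i == a) \sum_(y : X | y i == b) F x y.

Lemma sum_by_coord (F : X -> R) : \sum_x F x = \sum_a \sum_(x : X | x i == a) F x.
Proof. exact: (partition_big (fun x : X => x i) predT). Qed.

Lemma sum_mul_coord (F : X -> X -> R) (g : T i -> T i -> R) :
  \sum_x \sum_y F x y * g (x i) (y i) = \sum_a \sum_b block_sum F a b * g a b.
Proof.
rewrite sum_by_coord; apply: eq_bigr => a _.
under eq_bigr => x _ do rewrite sum_by_coord.
rewrite exchange_big; apply: eq_bigr => b _.
rewrite /block_sum big_distrl; apply: eq_bigr => x /eqP xa.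
by rewrite big_distrl; apply: eq_bigr => y /eqP yb; rewrite xa yb.
Qed.

Lemma block_sum_gt0 (F : X -> X -> R) a b x0 y0 :
  (forall x y, 0 <= F x y) -> x0 i = a -> y0 i = b -> 0 < F x0 y0 -> 0 < block_sum F a b.
Proof.
move=> F0 x0a y0b Fp; apply: (@psumr_gt0 _ _ _ _ x0); rewrite ?x0a //.
  by move=> x _; apply: sumr_ge0.
by apply: (@psumr_gt0 _ _ _ _ y0); rewrite ?y0b.
Qed.

Lemma sum_coord_invariant (G : X -> R) b c :
  (forall b y, G (set_coord b y) = G y) ->
  \sum_(y : X | y i == b) G y = \sum_(y : X | y i == c) G y.
Proof.
move=> Ginv; rewrite (reindex_onto (set_coord b) (set_coord c)); last first.
  by move=> y /eqP <-; rewrite set_coord2 set_coordK.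
apply: eq_big => [y|y _]; last exact: Ginv.
rewrite set_coord_at eqxx set_coord2; apply/eqP/eqP => [<-|<-].
  exact: set_coord_at.
by rewrite set_coordK.
Qed.

Lemma sum_mul_coord_row (G : X -> R) (L : T i -> T i -> R) a b :
  (forall b y, G (set_coord b y) = G y) -> \sum_c L a c = 1 ->
  \sum_y G y * L a (y i) = \sum_(y : X | y i == b) G y.
Proof.
move=> Ginv La1; rewrite sum_by_coord.
rewrite (eq_bigr (fun c => L a c * \sum_(y : X | y i == b) G y)).
  by rewrite -mulr_suml La1 mul1r.
move=> c _; rewrite (sum_coord_invariant G b c Ginv) mulr_sumr.
by apply: eq_bigr => y /eqP ->; rewrite mulrC.
Qed.

End CoordinateBlocks.

Lemma exists_row_gt0 {R : realType} {S : finType} {L : S -> S -> R} (a : S) :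
  is_trans L -> exists b, 0 < L a b.
Proof.
case=> L0 L1; have [|b /andP[_ Lab]] := @psumr_neq0P _ _ xpredT (L a) (fun b _ => L0 a b).
  by rewrite L1 => /eqP; rewrite oner_eq0.
by exists b.
Qed.

Section Objective.
Variables (R : realType) (d : nat) (T : 'I_d -> finType) (i : 'I_d).
Variables (Ls : forall j : 'I_d, T j -> T j -> R).
Variables (pi : prodX (T:=T) -> R) (P : prodX (T:=T) -> prodX (T:=T) -> R).
Hypotheses (pi_pmf : is_pmf pi) (pi_gt0 : forall x, 0 < pi x) (P_trans : is_trans P)
  (Ls_trans : forall j : 'I_d, j != i -> is_trans (Ls j)).

Local Notation X := (prodX (T:=T)).
Local Notation Z := (Zbold i Ls).
Local Notation tensor := (tensor_at i Ls).
Implicit Types (x y : X) (a b c : T i) (L : T i -> T i -> R).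

Lemma P_ge0 x y : 0 <= P x y. Proof. exact: P_trans.1. Qed.

Lemma Zbold_ge0 x y : 0 <= Z x y.
Proof. by apply: prodr_ge0 => j ji; case: (Ls_trans _ ji). Qed.

Lemma Zbold_set_coord x b y : Z x (set_coord i b y) = Z x y.
Proof. by apply: eq_bigr => j ji; rewrite set_coord_other. Qed.

Lemma tensor_at_ge0 L x y : is_trans L -> 0 <= tensor L x y.
Proof. by case=> L0 _; rewrite mulr_ge0 ?Zbold_ge0. Qed.

Lemma sum_invariant_mul_trans_sub (G : X -> X -> R) L L' :
  (forall x b y, G x (set_coord i b y) = G x y) -> is_trans L -> is_trans L' ->
  \sum_x pi x * \sum_y G x y * (L (x i) (y i) - L' (x i) (y i)) = 0.
Proof.
move=> Ginv [_ L1] [_ L'1]; apply: big1 => x _.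
under eq_bigr => y _ do rewrite mulrBr.
(* both sums are [\sum_(y | y i == x i) G x y] *)
rewrite sumrB (sum_mul_coord_row i _ _ (x i) (x i) (Ginv x) (L1 (x i))).
by rewrite (sum_mul_coord_row i _ _ (x i) (x i) (Ginv x) (L'1 (x i))) subrr mulr0.
Qed.

Section Decomposition.
Context {f : R -> R} {is_oo : R -> R -> bool} {summand : R -> R -> R}.
Hypothesis fterm_split :
  forall m q, 0 <= m -> 0 <= q -> fterm f m q = pinfty_or (is_oo m q) (summand m q).

Definition objective_is_oo L : bool := [exists x, exists y, is_oo (P x y) (tensor L x y)].
Definition objective_real L : R := \sum_x pi x * \sum_y summand (P x y) (tensor L x y).

Lemma objectiveE L : is_trans L ->
  objective i Ls pi P f L = pinfty_or (objective_is_oo L) (objective_real L).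
Proof.
move=> L_trans; rewrite /objective /fdiv.
under eq_bigr => x _.
  under eq_bigr => y _ do rewrite fterm_split ?P_ge0 ?tensor_at_ge0 //.
  by rewrite sum_pinfty_or pinfty_orZ //; over.
by rewrite sum_pinfty_or.
Qed.

Lemma objective_is_ooPn {L} : ~~ objective_is_oo L -> forall x y, ~~ is_oo (P x y) (tensor L x y).
Proof. by move=> /existsPn L_fin x; apply/existsPn. Qed.

Lemma objective_real_sub L L' : objective_real L - objective_real L' =
  \sum_x pi x * \sum_y (summand (P x y) (tensor L x y) - summand (P x y) (tensor L' x y)).
Proof. by rewrite -sumrB; apply: eq_bigr => x _; rewrite sumrB mulrBr. Qed.

Lemma unique_minimizer_of_leif q : is_trans q -> ~~ objective_is_oo q ->
  (forall L, is_trans L -> ~~ objective_is_oo L ->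
     objective_real q <= objective_real L ?= iff [forall a, forall b, L a b == q a b]) ->
  unique_minimizer i Ls pi P f q.
Proof.
move=> q_trans q_fin q_min; split.
  split=> // L L_trans; rewrite !objectiveE // (negbTE q_fin) /pinfty_or.
  by case: ifPn => [_|L_fin]; rewrite ?leey // lee_fin (q_min L).
move=> L [L_trans L_min] a b; have := L_min q q_trans.
rewrite !objectiveE // (negbTE q_fin) /pinfty_or.
case: ifPn => [_|L_fin]; first by rewrite leye_eq.
have [qL] := q_min L L_trans L_fin; rewrite lee_fin => + Lq.
by rewrite eq_le qL Lq => /esym/forallP/(_ a)/forallP/(_ b)/eqP.
Qed.

Lemma finite_min_Zbold_neq0 : (forall m, m != 0 -> is_oo m 0) ->
  finite_min i Ls pi P f -> forall x y, P x y != 0 -> Z x y != 0.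
Proof.
move=> oo0 [L [L_trans]]; rewrite objectiveE // /pinfty_or.
case: ifPn => [_|L_fin _ x y Pxy]; first by rewrite ltxx.
move: (objective_is_ooPn L_fin x y); apply: contra => /eqP Z0.
by rewrite /tensor_at Z0 mul0r oo0.
Qed.

End Decomposition.
Arguments objective_is_oo : clear implicits.
Arguments objective_real : clear implicits.

Lemma exists_coord a : exists x : X, x i = a.
Proof.
case: (pickP (fun _ : X => true)) => [x0 _|X0].
  by exists (set_coord i a x0); rewrite set_coord_at.
have : \sum_x pi x = 0 by apply: big1 => x _; have := X0 x.
by rewrite pi_pmf.2 => /eqP; rewrite oner_eq0.
Qed.

Lemma marg_gt0 a : 0 < marg i pi a.
Proof.
have [x xa] := exists_coord a.
apply: (@psumr_gt0 _ _ _ _ x); [by move=> x' _; exact: ltW | by rewrite xa | exact: pi_gt0].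
Qed.

Lemma exists_Zbold_gt0 x : exists y, 0 < Z x y.
Proof.
pose y : X := [ffun j => odflt (x j) [pick z | 0 < Ls j (x j) z]].
exists y; apply: prodr_gt0 => j ji; rewrite ffunE; case: pickP => [z //|none].
have [z Lz] := exists_row_gt0 (x j) (Ls_trans _ ji).
by move: (none z); rewrite Lz.
Qed.

Lemma ZsmallE a b : Zsmall i Ls pi a b = block_sum i (fun x y => pi x * Z x y) a b.
Proof. by []. Qed.

Lemma Zsmall_gt0 a b : 0 < Zsmall i Ls pi a b.
Proof.
have [x xa] := exists_coord a; have [y Zxy] := exists_Zbold_gt0 x.
rewrite ZsmallE; apply: (block_sum_gt0 i _ _ _ x (set_coord i b y) _ xa).
- by move=> x' y'; rewrite mulr_ge0 ?Zbold_ge0 ?ltW.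
- exact: set_coord_at.
- by rewrite Zbold_set_coord mulr_gt0.
Qed.

Lemma Zsmall_indep a b c : Zsmall i Ls pi a b = Zsmall i Ls pi a c.
Proof.
by apply: eq_bigr => x _; apply: sum_coord_invariant => b' y; rewrite Zbold_set_coord.
Qed.

Lemma normalize_trans (w : T i -> T i -> R) :
  (forall a b, 0 <= w a b) -> normalizable i w -> is_trans (normalize i w).
Proof.
move=> w0 w_gt0; split => [a b|a]; first by rewrite divr_ge0 // ltW.
by rewrite /normalize -mulr_suml mulfV // gt_eqF.
Qed.

Lemma normalizeK (w : T i -> T i -> R) a b :
  normalizable i w -> w a b = (\sum_c w a c) * normalize i w a b.
Proof. by move=> w_gt0; rewrite /normalize mulrCA mulfV ?mulr1 // gt_eqF. Qed.


Section KL.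
Hypothesis KL_fin : finite_min i Ls pi P f_KL.
Local Notation oo := (fun m q : R => (q == 0) && (m != 0)).
Local Notation r := (fun m q : R => m * (ln m - ln q)).
Local Notation Pm := (P_marg i pi P).
Local Notation C := (block_sum i (fun x y => pi x * P x y)).

Lemma KL_summand_tensor L x y : is_trans L -> ~~ oo (P x y) (tensor L x y) ->
  r (P x y) (tensor L x y) =
  P x y * (ln (P x y) - ln (Z x y)) - P x y * ln (L (x i) (y i)).
Proof.
case=> L0 _; have [->|Pn0] := eqVneq (P x y) 0; first by rewrite !mul0r subr0.
rewrite /= andbT /tensor_at mulf_eq0 negb_or => /andP[Zn0 Ln0].
by rewrite lnM ?posrE ?lt_def ?Zn0 ?Ln0 ?Zbold_ge0 ?L0 //; ring.
Qed.

Lemma KL_objective_real_sub L L' : is_trans L -> is_trans L' ->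
  ~~ objective_is_oo oo L -> ~~ objective_is_oo oo L' ->
  objective_real r L - objective_real r L' = \sum_a \sum_b C a b * (ln (L' a b) - ln (L a b)).
Proof.
move=> L_trans L'_trans L_fin L'_fin.
rewrite objective_real_sub -(sum_mul_coord i _ (fun a b => ln (L' a b) - ln (L a b))).
apply: eq_bigr => x _; rewrite mulr_sumr; apply: eq_bigr => y _.
by rewrite !KL_summand_tensor ?(objective_is_ooPn L_fin) ?(objective_is_ooPn L'_fin) //; ring.
Qed.

Lemma block_sum_P_row a : \sum_b C a b = marg i pi a.
Proof.
rewrite /block_sum exchange_big; apply: eq_bigr => x _.
by rewrite -sum_by_coord -mulr_sumr P_trans.2 mulr1.
Qed.

Lemma P_margE a b : Pm a b = C a b / marg i pi a.
Proof. by []. Qed.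

Lemma block_sum_P_margE a b : C a b = marg i pi a * Pm a b.
Proof. by rewrite P_margE mulrCA mulfV ?mulr1 // gt_eqF ?marg_gt0. Qed.

Lemma P_marg_trans : is_trans Pm.
Proof.
split=> [a b|a]; last by rewrite -mulr_suml block_sum_P_row mulfV // gt_eqF ?marg_gt0.
apply: divr_ge0; last exact/ltW/marg_gt0.
by apply: sumr_ge0 => x _; apply: sumr_ge0 => y _; rewrite mulr_ge0 ?P_ge0 ?ltW.
Qed.

Lemma P_marg_finite : ~~ objective_is_oo oo Pm.
Proof.
apply/existsPn => x; apply/existsPn => y; rewrite /= negb_and negbK.
have [_|Pn0] := eqVneq (P x y) 0; first by rewrite orbT.
rewrite orbF /tensor_at mulf_neq0 //.
  by apply: (finite_min_Zbold_neq0 fterm_KL) => // m; rewrite eqxx.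
rewrite P_margE lt0r_neq0 // divr_gt0 ?marg_gt0 //.
apply: (block_sum_gt0 i _ _ _ x y) => // [x' y'|]; first by rewrite mulr_ge0 ?P_ge0 ?ltW.
by rewrite mulr_gt0 // lt_def Pn0 P_ge0.
Qed.

Lemma KL_supported L a b : is_trans L -> ~~ objective_is_oo oo L -> 0 < Pm a b -> 0 < L a b.
Proof.
move=> [L0 _] L_fin Pm_gt0; rewrite lt_def L0 andbT; apply/eqP => Lab0.
move: Pm_gt0; rewrite P_margE (_ : C a b = 0) ?mul0r ?ltxx //.
apply: big1 => x /eqP xa; apply: big1 => y /eqP yb.
have := objective_is_ooPn L_fin x y; rewrite /tensor_at xa yb Lab0 mulr0 eqxx /= negbK.
by move=> /eqP ->; rewrite mulr0.
Qed.

Lemma KL_leif L : is_trans L -> ~~ objective_is_oo oo L ->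
  objective_real r Pm <= objective_real r L ?= iff [forall a, forall b, L a b == Pm a b].
Proof.
move=> L_trans L_fin.
rewrite -[objective_real r Pm]add0r -leifBRL.
rewrite (KL_objective_real_sub _ _ L_trans P_marg_trans L_fin P_marg_finite).
rewrite (eq_bigr (fun a => marg i pi a * \sum_b kl_bregman (Pm a b) (L a b))); last first.
  move=> a _; rewrite sum_kl_bregman; last by rewrite (P_marg_trans.2 a) (L_trans.2 a).
  by rewrite mulr_sumr; apply: eq_bigr => b _; rewrite block_sum_P_margE mulrA.
apply: leif0_sum_rows => [a|a b]; first exact: marg_gt0.
rewrite eq_sym; apply: kl_bregman_leif; [exact: P_marg_trans.1 | exact: L_trans.1 |].
exact: KL_supported.
Qed.

Lemma KL_unique_minimizer : unique_minimizer i Ls pi P f_KL Pm.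
Proof. exact: (unique_minimizer_of_leif fterm_KL _ P_marg_trans P_marg_finite KL_leif). Qed.

End KL.

Section Alpha.
Variable al : R.
Hypotheses (al_gt0 : 0 < al) (al_neq1 : al != 1).
Hypothesis alpha_fin : finite_min i Ls pi P (f_alpha al).
Hypothesis w_gt0 : normalizable i (w_alpha i Ls pi P al).
Local Notation oo := (fun m q : R => [&& 1 < al, q == 0 & m != 0]).
Local Notation r := (fun m q : R => (m `^ al * q `^ (1 - al) - q) / (al - 1)).
Local Notation w := (w_alpha i Ls pi P al).
Local Notation q := (normalize i w).
Local Notation W a := (\sum_(b : T i) w a b).

Definition alpha_weight a b : R :=
  block_sum i (fun x y => pi x * Z x y `^ (1 - al) * P x y `^ al) a b.

Lemma alpha_weight_ge0 a b : 0 <= alpha_weight a b.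
Proof.
by apply: sumr_ge0 => x _; apply: sumr_ge0 => y _; rewrite !mulr_ge0 ?powR_ge0 ?ltW.
Qed.

Lemma w_alpha_powR a b : w a b `^ al = alpha_weight a b.
Proof. by rewrite -powRrM mulVf ?gt_eqF // powRr1 ?alpha_weight_ge0. Qed.

Lemma alpha_weightE a b : alpha_weight a b = W a `^ al * q a b `^ al.
Proof.
rewrite -w_alpha_powR (normalizeK _ a b w_gt0) powRM ?sumr_ge0 // => [*|]; first exact: powR_ge0.
by rewrite divr_ge0 ?powR_ge0 ?sumr_ge0 // => *; exact: powR_ge0.
Qed.

Lemma q_alpha_trans : is_trans q.
Proof. by apply: normalize_trans w_gt0 => a b; exact: powR_ge0. Qed.

Lemma alpha_objective_real_sub L L' : is_trans L -> is_trans L' ->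
  objective_real r L - objective_real r L' =
  \sum_a \sum_b alpha_weight a b * ((L a b `^ (1 - al) - L' a b `^ (1 - al)) / (al - 1)).
Proof.
move=> L_trans L'_trans; rewrite objective_real_sub.
pose g a b := (L a b `^ (1 - al) - L' a b `^ (1 - al)) / (al - 1).
pose G x y := Z x y / (al - 1).
have Ginv x b y : G x (set_coord i b y) = G x y by rewrite /G Zbold_set_coord.
transitivity (\sum_x \sum_y pi x * Z x y `^ (1 - al) * P x y `^ al * g (x i) (y i) -
              \sum_x pi x * \sum_y G x y * (L (x i) (y i) - L' (x i) (y i))).
  rewrite -sumrB; apply: eq_bigr => x _; rewrite !mulr_sumr -!sumrB; apply: eq_bigr => y _.
  case: L_trans L'_trans => [L0 _] [L'0 _].
  rewrite /tensor_at !powRM ?Zbold_ge0 ?L0 ?L'0 // /g /G; field.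
  by rewrite subr_eq0.
by rewrite sum_invariant_mul_trans_sub // subr0 sum_mul_coord.
Qed.

Lemma alpha_row_sub a L : is_trans L ->
  \sum_b alpha_weight a b * ((L a b `^ (1 - al) - q a b `^ (1 - al)) / (al - 1)) =
  W a `^ al * \sum_b alpha_gap al (q a b) (L a b).
Proof.
case=> _ L1; have [q0 q1] := q_alpha_trans.
apply/eqP; rewrite mulr_sumr -subr_eq0 -sumrB.
rewrite (eq_bigr (fun b => W a `^ al * (q a b - L a b))); last first.
  move=> b _; rewrite alpha_weightE /alpha_gap.
  have := mulr_powR1B _ al (q0 a b).
  set A := q a b `^ al; set B := q a b `^ (1 - al) => <-.
  by field; rewrite subr_eq0.
by rewrite -mulr_sumr sumrB q1 L1 subrr mulr0.
Qed.

Lemma alpha_supported L a b : 1 < al -> is_trans L -> ~~ objective_is_oo oo L ->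
  L a b = 0 -> q a b = 0.
Proof.
move=> al_gt1 _ L_fin Lab0.
have : alpha_weight a b = 0.
  apply: big1 => x /eqP xa; apply: big1 => y /eqP yb.
  have := objective_is_ooPn L_fin x y.
  rewrite /= al_gt1 /tensor_at xa yb Lab0 mulr0 eqxx /= negbK => /eqP ->.
  by rewrite powR0 ?mulr0 // lt0r_neq0.
rewrite alpha_weightE => /eqP; rewrite mulf_eq0 !powR_eq0 (gt_eqF (w_gt0 a)) /=.
by rewrite (lt0r_neq0 al_gt0) andbT => /eqP.
Qed.

Lemma q_alpha_finite : ~~ objective_is_oo oo q.
Proof.
apply/existsPn => x; apply/existsPn => y; rewrite /= negb_and.
have [al_gt1|//] := ltrP 1 al; rewrite /= negb_and negbK.
have [_|Pn0] := eqVneq (P x y) 0; first by rewrite orbT.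
have Zn0 : Z x y != 0.
  apply: (finite_min_Zbold_neq0 (fterm_alpha _ al_gt0 al_neq1)) => // m m_neq0.
  by rewrite al_gt1 eqxx.
rewrite orbF /tensor_at mulf_neq0 //.
have : 0 < alpha_weight (x i) (y i).
  apply: (block_sum_gt0 i _ _ _ x y) => // [x' y'|]; first by rewrite !mulr_ge0 ?powR_ge0 ?ltW.
  by rewrite !mulr_gt0 ?powR_gt0 // lt_def ?Pn0 ?Zn0 ?P_ge0 ?Zbold_ge0.
rewrite alpha_weightE; apply: contraTneq => ->.
by rewrite powR0 ?mulr0 ?ltxx // lt0r_neq0.
Qed.

Lemma alpha_leif L : is_trans L -> ~~ objective_is_oo oo L ->
  objective_real r q <= objective_real r L ?= iff [forall a, forall b, L a b == q a b].
Proof.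
move=> L_trans L_fin; rewrite -[objective_real r q]add0r -leifBRL.
rewrite (alpha_objective_real_sub _ _ L_trans q_alpha_trans).
under eq_bigr => a _ do rewrite (alpha_row_sub _ _ L_trans).
apply: leif0_sum_rows => [a|a b]; first by rewrite powR_gt0.
rewrite eq_sym; apply: alpha_gap_leif => //; [exact: q_alpha_trans.1 | exact: L_trans.1 |].
by move=> al_gt1; apply: alpha_supported.
Qed.

Lemma alpha_unique_minimizer : unique_minimizer i Ls pi P (f_alpha al) q.
Proof.
exact: (unique_minimizer_of_leif (fterm_alpha _ al_gt0 al_neq1) _ q_alpha_trans
  q_alpha_finite alpha_leif).
Qed.

End Alpha.

Section RevKL.
Hypothesis w_gt0 : normalizable i (w_revKL i Ls pi P).
Local Notation oo := (fun m q : R => (q != 0) && (m == 0)).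
Local Notation r := (fun m q : R => q * (ln q - ln m)).
Local Notation w := (w_revKL i Ls pi P).
Local Notation q := (normalize i w).
Local Notation W a := (\sum_(b : T i) w a b).
Local Notation Zs := (Zsmall i Ls pi).
Local Notation Km := (block_sum i (fun x y => pi x * Z x y * ln (P x y))).

Lemma revKL_summand_tensor L x y : is_trans L ->
  r (P x y) (tensor L x y) =
  Z x y * ln (Z x y) * L (x i) (y i) + Z x y * (L (x i) (y i) * ln (L (x i) (y i))) -
  Z x y * ln (P x y) * L (x i) (y i).
Proof.
case=> L0 _; rewrite /= /tensor_at.
have [->|Zn0] := eqVneq (Z x y) 0; first by rewrite !mul0r !(subr0, addr0).
have [->|Ln0] := eqVneq (L (x i) (y i)) 0; first by rewrite !(mulr0, mul0r, subr0, addr0).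
by rewrite lnM ?posrE ?lt_def ?Zn0 ?Ln0 ?Zbold_ge0 ?L0 //; ring.
Qed.

Lemma revKL_objective_real_sub L L' : is_trans L -> is_trans L' ->
  objective_real r L - objective_real r L' = \sum_a \sum_b
    (Zs a b * (L a b * ln (L a b) - L' a b * ln (L' a b)) - Km a b * (L a b - L' a b)).
Proof.
move=> L_trans L'_trans; rewrite objective_real_sub.
pose G x y := Z x y * ln (Z x y).
have Ginv x b y : G x (set_coord i b y) = G x y by rewrite /G Zbold_set_coord.
pose g1 a b := L a b * ln (L a b) - L' a b * ln (L' a b).
pose g2 a b := L a b - L' a b.
transitivity (\sum_x pi x * \sum_y G x y * (L (x i) (y i) - L' (x i) (y i)) +
  (\sum_x \sum_y pi x * Z x y * g1 (x i) (y i) -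
   \sum_x \sum_y pi x * Z x y * ln (P x y) * g2 (x i) (y i))).
  rewrite -sumrB -big_split /=; apply: eq_bigr => x _.
  rewrite !mulr_sumr -sumrB -big_split /=; apply: eq_bigr => y _.
  by rewrite !revKL_summand_tensor // /G /g1 /g2; ring.
rewrite sum_invariant_mul_trans_sub // add0r !sum_mul_coord -sumrB.
by apply: eq_bigr => a _; rewrite -sumrB.
Qed.

Definition P_supports_Z_on_block a b : Prop :=
  forall x y, x i = a -> y i = b -> Z x y != 0 -> P x y != 0.

Lemma w_revKL_ge0 a b : 0 <= w a b.
Proof. by apply: prodr_ge0 => x _; apply: prodr_ge0 => y _; exact: powR_ge0. Qed.

Lemma w_revKL_factor_gt0 a b x y : P_supports_Z_on_block a b -> x i = a -> y i = b ->
  0 < P x y `^ (pi x * Z x y / Zs a b).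
Proof.
move=> supp xa yb; have [->|Zn0] := eqVneq (Z x y) 0; first by rewrite mulr0 mul0r powRr0.
by rewrite powR_gt0 // lt_def supp ?P_ge0.
Qed.

Lemma w_revKL_gt0 a b : P_supports_Z_on_block a b -> 0 < w a b.
Proof.
move=> supp; apply: prodr_gt0 => x /eqP xa; apply: prodr_gt0 => y /eqP yb.
exact: w_revKL_factor_gt0.
Qed.

Lemma ln_w_revKL a b : P_supports_Z_on_block a b -> ln (w a b) = Km a b / Zs a b.
Proof.
move=> supp; rewrite /w_revKL ln_prod => [|x /eqP xa]; last first.
  by apply: prodr_gt0 => y /eqP yb; exact: w_revKL_factor_gt0.
rewrite mulr_suml; apply: eq_bigr => x /eqP xa.
rewrite ln_prod => [|y /eqP yb]; last exact: w_revKL_factor_gt0.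
by rewrite mulr_suml; apply: eq_bigr => y _; rewrite ln_powR mulrAC.
Qed.

Lemma w_revKL_eq0 a b x y : x i = a -> y i = b -> Z x y != 0 -> P x y = 0 -> w a b = 0.
Proof.
move=> xa yb Zn0 P0; rewrite /w_revKL (bigD1 x) ?xa //= (bigD1 y) ?yb //= P0 powR0 ?mul0r //.
have pi_neq0 := lt0r_neq0 (pi_gt0 x); have Zs_neq0 := lt0r_neq0 (Zsmall_gt0 a b).
by rewrite !mulf_neq0 ?invr_eq0.
Qed.

Lemma revKL_supported L a b : ~~ objective_is_oo oo L -> 0 < L a b -> P_supports_Z_on_block a b.
Proof.
move=> L_fin Lab x y xa yb Zn0; have := objective_is_ooPn L_fin x y.
by rewrite /tensor_at xa yb mulf_neq0 ?(lt0r_neq0 Lab) //=.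
Qed.

Lemma q_revKL_trans : is_trans q.
Proof. exact: normalize_trans w_revKL_ge0 w_gt0. Qed.

Lemma q_revKL_finite : ~~ objective_is_oo oo q.
Proof.
apply/existsPn => x; apply/existsPn => y; apply/negP => /andP[].
rewrite /tensor_at mulf_eq0 negb_or => /andP[Zn0 qn0] /eqP P0.
by move: qn0; rewrite /normalize (w_revKL_eq0 (x i) (y i) x y) ?mul0r ?eqxx.
Qed.

Lemma revKL_term L a b : is_trans L -> ~~ objective_is_oo oo L ->
  Zs a b * (L a b * ln (L a b) - q a b * ln (q a b)) - Km a b * (L a b - q a b) =
  Zs a a * (kl_bregman (L a b) (q a b) + (ln (W a) - 1) * (q a b - L a b)).
Proof.
move=> [L0 _] L_fin.
(* either [P] vanishes somewhere on the block where [Z] does not, and then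
   [w a b = q a b = L a b = 0], or [ln (w a b) = Km a b / Zs a b] *)
have [/existsP[x /existsP[y /and4P[/eqP xa /eqP yb Zn0 /eqP P0]]]|nodeg] :=
  boolP [exists x : X, exists y : X, [&& x i == a, y i == b, Z x y != 0 & P x y == 0]].
  have q0 : q a b = 0 by rewrite /normalize (w_revKL_eq0 _ _ x y) ?mul0r.
  have Lab0 : L a b = 0.
    apply/eqP; rewrite eq_le L0 andbT leNgt; apply/negP => /(revKL_supported _ _ _ L_fin).
    by move=> /(_ x y xa yb Zn0); rewrite P0 eqxx.
  by rewrite q0 Lab0 /kl_bregman; ring.
have supp : P_supports_Z_on_block a b.
  move=> x y xa yb Zn0; apply/negP => /eqP P0.
  move/existsPn: nodeg => /(_ x) /existsPn /(_ y).
  by rewrite xa yb Zn0 P0 !eqxx.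
have q_gt0 : 0 < q a b by rewrite divr_gt0 ?w_revKL_gt0.
have KmE : Km a b = Zs a b * (ln (W a) + ln (q a b)).
  rewrite -lnM ?posrE // -normalizeK // ln_w_revKL // mulrC divfK //.
  exact/lt0r_neq0/Zsmall_gt0.
by rewrite KmE (Zsmall_indep a b a) /kl_bregman; ring.
Qed.

Lemma revKL_leif L : is_trans L -> ~~ objective_is_oo oo L ->
  objective_real r q <= objective_real r L ?= iff [forall a, forall b, L a b == q a b].
Proof.
move=> L_trans L_fin; rewrite -[objective_real r q]add0r -leifBRL.
rewrite (revKL_objective_real_sub _ _ L_trans q_revKL_trans).
rewrite (eq_bigr (fun a => Zs a a * \sum_b kl_bregman (L a b) (q a b))); last first.
  move=> a _; under eq_bigr => b _ do rewrite (revKL_term _ _ _ L_trans L_fin).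
  have rows_sub : \sum_b (q a b - L a b) = 0.
    by rewrite sumrB (q_revKL_trans.2 a) (L_trans.2 a) subrr.
  by rewrite -mulr_sumr big_split /= -mulr_sumr rows_sub mulr0 addr0.
apply: leif0_sum_rows => [a|a b]; first exact: Zsmall_gt0.
apply: kl_bregman_leif; [exact: L_trans.1 | exact: q_revKL_trans.1 |].
move=> Lab_gt0; apply: divr_gt0 => //.
exact/w_revKL_gt0/(revKL_supported _ _ _ L_fin Lab_gt0).
Qed.

Lemma revKL_unique_minimizer : unique_minimizer i Ls pi P f_revKL q.
Proof.
exact: (unique_minimizer_of_leif fterm_revKL _ q_revKL_trans q_revKL_finite revKL_leif).
Qed.

End RevKL.

End Objective.

Theorem theorem2p11 (R : realType) (d : nat) (T : 'I_d -> finType)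
  (pi : prodX (T:=T) -> R) (P : prodX (T:=T) -> prodX (T:=T) -> R) (i : 'I_d)
  (Ls : forall j : 'I_d, T j -> T j -> R) :
  is_pmf pi -> (forall x, 0 < pi x) -> is_trans P ->
  (forall j : 'I_d, j != i -> is_trans (Ls j)) ->
  [/\
   (* 1. reverse KL *)
   (normalizable i (w_revKL i Ls pi P) ->
    unique_minimizer i Ls pi P f_revKL (normalize i (w_revKL i Ls pi P))),
   (* 2. alpha-divergence *)
   (forall alpha : R, 0 < alpha -> alpha != 1 ->
    finite_min i Ls pi P (f_alpha alpha) ->
    normalizable i (w_alpha i Ls pi P alpha) ->
    unique_minimizer i Ls pi P (f_alpha alpha) (normalize i (w_alpha i Ls pi P alpha)))
  & (* 3. KL *)
   (finite_min i Ls pi P f_KL ->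
    unique_minimizer i Ls pi P f_KL (P_marg i pi P))].
Proof.
move=> pi_pmf pi_gt0 P_trans Ls_trans; split.
- by move=> w_gt0; apply: revKL_unique_minimizer.
- by move=> alpha alpha_gt0 alpha_neq1 fin w_gt0; apply: alpha_unique_minimizer.
- by move=> fin; apply: KL_unique_minimizer.
Qed.
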